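(* Let $s\ge1$ and $v\ge 2$ be integers. If there exists an orthogonal array OA$(s,2s,v)$, then there exists a $(t_i,t_o,s,v)$-AONT for all integers $t_i,t_o$ with $1\le t_i\le t_o\le s$.
   Context: An $(N,k,v)$-array is an $N\times k$ array with entries from an alphabet $\Gamma$ of size $v$. For a set $D$ of columns, the array is unbiased with respect to $D$ if the rows of the subarray consisting of the columns in $D$ contain every $|D|$-tuple over $\Gamma$ exactly $N/v^{|D|}$ times. An orthogonal array OA$(t,k,v)$ is a $(v^t,k,v)$-array that is unbiased with respect to every set of $t$ columns. For integers $1\le t_i\le t_o\le s$, a $(t_i,t_o,s,v)$-all-or-nothing transform (AONT) is a $(v^s,2s,v)$-array with columns labelled $1,\dots,2s$ that is unbiased with respect to $\{1,\dots,s\}$, with respect to $\{s+1,\dots,2s\}$, and with respect to $I\cup J$ for every $I\subseteq\{1,\dots,s\}$ with $|I|=t_i$ and every $J\subseteq\{s+1,\dots,2s\}$ with $|J|=s-t_o$. *)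

From mathcomp Require Import all_boot.
Set Implicit Arguments. Unset Strict Implicit. Unset Printing Implicit Defensive.

(* An (N,k,v)-array over the alphabet 'I_v: rows 'I_N, columns 'I_k
   (column labels 1..k of the paper are 0..k-1 here). *)
Definition array (N k v : nat) := 'I_N -> 'I_k -> 'I_v.

(* Unbiased w.r.t. the column set D: every |D|-tuple over the alphabet
   (represented as an assignment x of symbols to the columns of D) occurs in
   exactly N / v^|D| rows of the subarray on D (stated multiplicatively). *)
Definition unbiased (N k v : nat) (A : array N k v) (D : {set 'I_k}) : Prop :=
  forall x : {ffun 'I_k -> 'I_v},
    #|[set r : 'I_N | [forall c in D, A r c == x c]]| * v ^ #|D| = N.

Definition is_OA (t k v : nat) (A : array (v ^ t) k v) : Prop :=
  forall D : {set 'I_k}, #|D| = t -> unbiased A D.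

(* Columns 1..s of the paper = indices < s; columns s+1..2s = indices >= s. *)
Definition first_half (s : nat) : {set 'I_(2 * s)} := [set i : 'I_(2 * s) | i < s].
Definition second_half (s : nat) : {set 'I_(2 * s)} := [set i : 'I_(2 * s) | s <= i].

Definition is_AONT (ti to s v : nat) (A : array (v ^ s) (2 * s) v) : Prop :=
  [/\ unbiased A (first_half s),
      unbiased A (second_half s) &
      forall I J : {set 'I_(2 * s)},
        I \subset first_half s -> #|I| = ti ->
        J \subset second_half s -> #|J| = s - to ->
        unbiased A (I :|: J)].

(* An orthogonal array of strength s is unbiased with respect to every set of
   at most s columns, since unbiasedness on a set of columns passes to its
   subsets.  The OA(s,2s,v) itself is therefore a (t_i,t_o,s,v)-AONT: each
   half has s columns, and I :|: J has at most t_i + (s - t_o) <= s. *)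
From mathcomp Require Import all_boot.

Set Implicit Arguments.
Unset Strict Implicit.
Unset Printing Implicit Defensive.

Lemma exists_superset_card (T : finType) (A : {set T}) (n : nat) :
  #|A| <= n <= #|T| -> exists2 B : {set T}, A \subset B & #|B| = n.
Proof.
elim: n => [|n IH] /andP[leAn lenT].
  by exists A; last by apply/eqP; rewrite -leqn0.
have [eqAn | neAn] := eqVneq #|A| n.+1; first by exists A.
have [|B sAB cardB] := IH.
  by rewrite -ltnS ltn_neqAle neAn leAn ltnW.
have /set0Pn[x Bx] : ~: B != set0.
  by rewrite -card_gt0 -(ltn_add2l #|B|) addn0 cardsC cardB.
exists (x |: B); first exact: subset_trans sAB (subsetU1 x B).
by rewrite cardsU1 -in_setC Bx cardB.
Qed.

Lemma card_ord_ltn (m n : nat) : m <= n -> #|[set i : 'I_n | i < m]| = m.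
Proof.
move=> lemn; have -> : [set i : 'I_n | i < m] = widen_ord lemn @: [set: 'I_m].
  apply/setP => i; rewrite inE; apply/idP/imsetP => [ltim | [j _ ->]].
    by exists (Ordinal ltim); last exact: val_inj.
  exact: (ltn_ord j).
by rewrite card_imset ?cardsT ?card_ord // => i j [] /val_inj.
Qed.

Section Unbiased.
Variables (N k v : nat) (A : array N k v).
Implicit Types (D E : {set 'I_k}) (c : 'I_k) (x : {ffun 'I_k -> 'I_v}).

Definition agree_rows D x : {set 'I_N} :=
  [set r | [forall c in D, A r c == x c]].

Lemma in_agree_rows_setD1 D c x (a : 'I_v) (r : 'I_N) :
  c \in D ->
  (r \in agree_rows D [ffun j => if j == c then a else x j]) =
  (r \in agree_rows (D :\ c) x) && (A r c == a).
Proof.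
move=> Dc; rewrite !inE; apply/forallP/andP => [agree | [/forallP agree Arc]].
  split; last by move: (agree c); rewrite Dc ffunE eqxx.
  apply/forallP => j; apply/implyP; rewrite !inE => /andP[njc Dj].
  by move: (agree j); rewrite Dj ffunE (negbTE njc).
move=> j; apply/implyP => Dj; rewrite ffunE.
have [-> // | njc] := eqVneq j c.
by move: (agree j); rewrite !inE njc Dj.
Qed.

Lemma card_agree_rows_setD1 D c x :
  c \in D ->
  #|agree_rows (D :\ c) x| =
  \sum_(a : 'I_v) #|agree_rows D [ffun j => if j == c then a else x j]|.
Proof.
move=> Dc; rewrite -sum1_card (partition_big (fun r => A r c) predT) //=.
apply: eq_bigr => a _; rewrite -sum1_card; apply: eq_bigl => r.
by rewrite in_agree_rows_setD1.
Qed.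

Hypothesis v_gt0 : 0 < v.

Lemma unbiased_setD1 D c :
  c \in D -> unbiased A D -> unbiased A (D :\ c).
Proof.
move=> Dc unbD x; rewrite -/(agree_rows _ x).
have cardD : #|D| = #|D :\ c|.+1 by rewrite (cardsD1 c D) Dc.
apply/eqP; rewrite -(eqn_pmul2l v_gt0) mulnCA -expnS -cardD.
rewrite card_agree_rows_setD1 // big_distrl /=.
rewrite (eq_bigr (fun _ => N)) ?sum_nat_const ?card_ord // => a _.
exact: unbD.
Qed.

Lemma unbiased_subset D E :
  E \subset D -> unbiased A D -> unbiased A E.
Proof.
have [n] := ubnP #|D|; elim: n D => // n IH D ltDn sED unbD.
have [-> // | neED] := eqVneq E D.
have /set0Pn[c] : D :\: E != set0.
  by rewrite setD_eq0; apply: contra neED => sDE; rewrite eqEsubset sED sDE.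
rewrite inE => /andP[nEc Dc].
apply: (IH (D :\ c)); last exact: unbiased_setD1.
- by move: ltDn; rewrite (cardsD1 c D) Dc.
- apply/subsetP => j Ej; rewrite !inE (subsetP sED) // andbT.
  by apply: contraNneq nEc => <-.
Qed.

End Unbiased.

Lemma OA_unbiased (t k v : nat) (O : array (v ^ t) k v) (D : {set 'I_k}) :
  0 < v -> is_OA O -> t <= k -> #|D| <= t -> unbiased O D.
Proof.
move=> v_gt0 OA letk leDt.
have [|E sDE cardE] := @exists_superset_card _ D t.
  by rewrite leDt card_ord.
exact: (unbiased_subset v_gt0 sDE (OA E cardE)).
Qed.

Lemma card_first_half (s : nat) : #|first_half s| = s.
Proof. by rewrite card_ord_ltn // mul2n -addnn leq_addr. Qed.

Lemma card_second_half (s : nat) : #|second_half s| = s.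
Proof.
have -> : second_half s = ~: first_half s.
  by apply/setP => i; rewrite !inE leqNgt.
apply/eqP; rewrite -(eqn_add2l s) addnn -mul2n.
by rewrite -{1}(card_first_half s) cardsC card_ord.
Qed.

Theorem mainTheorem2 (s v : nat) (hs : 1 <= s) (hv : 2 <= v) :
  (exists A : array (v ^ s) (2 * s) v, is_OA A) ->
  forall ti to : nat, 1 <= ti -> ti <= to -> to <= s ->
    exists B : array (v ^ s) (2 * s) v, is_AONT ti to B.
Proof.
move=> [A OA] ti to _ leti leos; exists A.
have small_unbiased (D : {set 'I_(2 * s)}) : #|D| <= s -> unbiased A D.
  by apply: OA_unbiased (ltnW hv) OA _; rewrite mul2n -addnn leq_addr.
split.
- by apply: small_unbiased; rewrite card_first_half.
- by apply: small_unbiased; rewrite card_second_half.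
- move=> I J _ cardI _ cardJ; apply: small_unbiased.
  apply: leq_trans (leq_card_setU I J) _.
  by rewrite cardI cardJ addnBA // leq_subLR leq_add2r.
Qed.
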